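(* Let $f\in C^1(\mathbb{R}^n,\mathbb{R}^n)$ and let $x_0$ be a nondegenerate $T$-periodic limit cycle of $\dot x=f(x)$, $T>0$. Let $A_{n-1}$ be any real $n\times(n-1)$ matrix such that the $n\times n$ matrix $(\dot x_0(0),A_{n-1})$ is nonsingular, and define, for $v\in\mathbb{R}^{n-1}$ near $0$, $S(v)=\Omega(T,0,x_0(0)+A_{n-1}v)$. Then $\dot x_0(0)\notin S'(0)(\mathbb{R}^{n-1})$.
   Context: $\Omega(\cdot,t_0,\xi)$ denotes the solution of the autonomous system $\dot x=f(x)$ satisfying $\Omega(t_0,t_0,\xi)=\xi$. The linearized system along $x_0$ is $\dot y=f'(x_0(t))y$; if $Y(t)$ is its fundamental matrix with $Y(0)=I$, the eigenvalues of $Y(T)$ are its characteristic multipliers ($+1$ is always one of them, since $\dot x_0$ is a $T$-periodic solution). The $T$-periodic limit cycle $x_0$ is called nondegenerate if the characteristic multiplier $+1$ of $\dot y=f'(x_0(t))y$ has algebraic multiplicity $1$ (as a root of the characteristic polynomial of $Y(T)$). *)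

From HB Require Import structures.
From mathcomp Require Import all_boot all_order all_algebra.
From mathcomp Require Import all_classical all_reals all_analysis.
Set Implicit Arguments. Unset Strict Implicit. Unset Printing Implicit Defensive.
Import Order.TTheory GRing.Theory Num.Theory.
Import numFieldNormedType.Exports.
Local Open Scope ring_scope.
Local Open Scope classical_set_scope.

Definition is_C1 (R : realType) (n : nat) (f : 'rV[R]_n -> 'rV[R]_n) : Prop :=
  (forall x, differentiable f x) /\ continuous (fun x => 'J f x).

Definition solution_on (R : realType) (n : nat) (f : 'rV[R]_n -> 'rV[R]_n)
  (a b : R) (y : R -> 'rV[R]_n) : Prop :=
  forall t : R, a < t < b -> is_derive t (1 : R) y (f (y t)).

Definition global_solution (R : realType) (n : nat) (f : 'rV[R]_n -> 'rV[R]_n)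
  (y : R -> 'rV[R]_n) : Prop :=
  forall t : R, is_derive t (1 : R) y (f (y t)).

Definition limit_cycle (R : realType) (n : nat) (f : 'rV[R]_n -> 'rV[R]_n)
  (x0 : R -> 'rV[R]_n) (T : R) : Prop :=
  [/\ 0 < T, global_solution f x0, (forall t, x0 (t + T) = x0 t),
      (exists t, x0 t != x0 0) &
      exists2 eps : R, 0 < eps &
        forall (y : R -> 'rV[R]_n) (T' : R), 0 < T' -> global_solution f y ->
          (forall t, y (t + T') = y t) -> (exists t, y t != y 0) ->
          (forall t, exists s, `|y t - x0 s| < eps) ->
          range y = range x0].

(* With row vectors the linearization reads y' = y *m 'J f (x0 t) and the rows
   of Y are solutions; Y t is the transpose of the column-convention
   fundamental matrix, so it has the same characteristic polynomial. *)
Definition fundamental_matrix (R : realType) (n : nat)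
  (f : 'rV[R]_n -> 'rV[R]_n) (x0 : R -> 'rV[R]_n) (Y : R -> 'M[R]_n) : Prop :=
  Y 0 = 1%:M /\ forall t : R, is_derive t (1 : R) Y (Y t *m 'J f (x0 t)).

Definition nondegenerate_cycle (R : realType) (n : nat) (f : 'rV[R]_n -> 'rV[R]_n)
  (x0 : R -> 'rV[R]_n) (T : R) : Prop :=
  forall Y : R -> 'M[R]_n, fundamental_matrix f x0 Y ->
    mup 1 (char_poly (Y T)) = 1%N.

(* If S'(0) w = x0'(0), compare for small h the solution u_h starting at
   x0(0) + h w A with the orbit through x0(h).  While the two stay within
   distance 1, f is Lipschitz around them and a two-sided Gronwall estimate
   shows that their gap is multiplied by at most a fixed factor over one
   period, in both time directions.  By periodicity the final gap is
   u_h(T) - x0(T + h) = (S(h w) - S(0)) - (x0(h) - x0(0)) = o(h), hence so is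
   the initial gap h (w A - x0'(0)) + o(h).  Thus w A = x0'(0), i.e. the
   rows of (x0'(0); A) are dependent. *)

From HB Require Import structures.
From mathcomp Require Import all_boot all_order all_algebra.
From mathcomp Require Import all_classical all_reals all_analysis.
From mathcomp Require Import ring lra.
Set Implicit Arguments. Unset Strict Implicit. Unset Printing Implicit Defensive.
Import Order.TTheory GRing.Theory Num.Theory.
Import numFieldNormedType.Exports.
Local Open Scope ring_scope.
Local Open Scope classical_set_scope.

Section matrix_norm.
Context {R : realFieldType}.

Lemma mx_norm_ge_entry m n (M : 'M[R]_(m, n)) i j : `|M i j| <= `|M|.
Proof.
rewrite [leRHS]/Num.Def.normr/= mx_normrE.
by apply: le_trans; last exact: (le_bigmax _ _ (i, j)).
Qed.

Lemma mx_norm_le m n (M : 'M[R]_(m, n)) c :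
  0 <= c -> (forall i j, `|M i j| <= c) -> `|M| <= c.
Proof.
move=> c0 Mc; rewrite [leLHS]/Num.Def.normr/= mx_normrE.
by apply: bigmax_le => // -[i j] _; exact: Mc.
Qed.

(* The matrix norm of MathComp-Analysis is the sup norm, which is not
   differentiable; Gronwall's argument runs on the squared Euclidean norm. *)
Definition sqnorm n (w : 'rV[R]_n) : R := \sum_(i < n) w ord0 i ^+ 2.

Lemma sqnorm_ge0 n (w : 'rV[R]_n) : 0 <= sqnorm w.
Proof. by apply: sumr_ge0 => i _; exact: sqr_ge0. Qed.

Lemma sqr_mx_norm_le_sqnorm n (w : 'rV[R]_n) : `|w| ^+ 2 <= sqnorm w.
Proof.
have [/eqP|/mx_norm_neq0 [[i j] /= wE]] := eqVneq `|w| 0.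
  by rewrite normr_eq0 => /eqP ->; rewrite normr0 expr0n sqnorm_ge0.
rewrite (_ : `|w| = `|w i j|); last exact: wE.
rewrite (ord1 i) real_normK ?num_real // /sqnorm (bigD1 j) //= lerDl.
by apply: sumr_ge0 => k _; exact: sqr_ge0.
Qed.

Lemma sqnorm_le_sqr_mx_norm n (w : 'rV[R]_n) : sqnorm w <= n%:R * `|w| ^+ 2.
Proof.
rewrite /sqnorm mulr_natl -[n in _ *+ n]card_ord -sumr_const.
apply: ler_sum => i _; rewrite -real_normK ?num_real //.
by apply: lerXn2r; rewrite ?nnegrE // mx_norm_ge_entry.
Qed.

Lemma is_derive_rV_entry n (w : R -> 'rV[R]_n) (t : R) dw i :
  is_derive t 1 w dw -> is_derive t 1 (fun s => w s ord0 i) (dw ord0 i).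
Proof.
move=> [wd <-].
by apply: DeriveDef; [move/derivable_mxP: wd; apply|rewrite derive_mx // mxE].
Qed.

Lemma is_derive_sqnorm n (w : R -> 'rV[R]_n) (t : R) dw :
  is_derive t 1 w dw ->
  is_derive t 1 (fun s => sqnorm (w s)) (\sum_(i < n) 2 * w t ord0 i * dw ord0 i).
Proof.
move=> wd.
have := is_derive_sum (fun i => is_deriveX 2 (is_derive_rV_entry i wd)).
rewrite fct_sumE; under eq_fun do under eq_bigr do rewrite exprfctE.
move=> sum_derive; rewrite /sqnorm; apply: (is_derive_eq sum_derive).
by apply: eq_bigr => i _; rewrite expr1.
Qed.

End matrix_norm.

Section difference_quotients.
Context {R : numFieldType} {U V : normedModType R}.

Lemma is_derive_along_line (f : U -> V) (x v : U) (t : R) :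
  differentiable f (t *: v + x) ->
  is_derive t 1 (fun s => f (s *: v + x)) ('D_v f (t *: v + x)).
Proof.
move=> df.
have shiftE : (fun k : R => k^-1 *: (((fun s => f (s *: v + x)) \o shift t) (k *: 1)
                                     - f (t *: v + x)))
            = (fun k => k^-1 *: ((f \o shift (t *: v + x)) (k *: v) - f (t *: v + x))).
  by apply/funext => k /=; rewrite [k *: 1]mulr1 scalerDl addrA.
split; last by rewrite /derive shiftE.
by rewrite /derivable shiftE; exact: diff_derivable.
Qed.

Lemma is_derive_translate (g : R -> V) (t h : R) dg :
  is_derive (t + h) 1 g dg -> is_derive t 1 (fun s => g (s + h)) dg.
Proof.
move=> [gd <-].
have shiftE : (fun k : R =>
                 k^-1 *: (((fun s => g (s + h)) \o shift t) (k *: 1) - g (t + h)))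
            = (fun k => k^-1 *: ((g \o shift (t + h)) (k *: 1) - g (t + h))).
  by apply/funext => k /=; rewrite addrA.
split; last by rewrite /derive shiftE.
by rewrite /derivable shiftE.
Qed.

Lemma derive1_quotient_cvg (g : R -> V) :
  derivable g 0 1 -> h^-1 *: (g h - g 0) @[h --> 0^'] --> g^`() 0.
Proof.
have shiftE : (fun h : R => h^-1 *: ((g \o shift 0) (h *: 1) - g 0))
            = (fun h => h^-1 *: (g h - g 0)).
  by apply/funext => h /=; rewrite addr0 [h *: 1]mulr1.
by rewrite derive1E /derivable /derive shiftE.
Qed.

Lemma diff_quotient_cvg (F : U -> V) (w : U) :
  differentiable F 0 -> h^-1 *: (F (h *: w) - F 0) @[h --> 0^'] --> 'd F 0 w.
Proof.
move=> Fd; have : derivable F 0 w by exact: diff_derivable.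
have shiftE : (fun h : R => h^-1 *: ((F \o shift 0) (h *: w) - F 0))
            = (fun h => h^-1 *: (F (h *: w) - F 0)).
  by apply/funext => h /=; rewrite addr0.
by rewrite -deriveE // /derivable /derive shiftE.
Qed.

Lemma near0_scale (P : U -> Prop) (w : U) :
  (\forall v \near 0, P v) -> \forall h \near (0 : R), P (h *: w).
Proof.
have hw0 : h *: w @[h --> (0 : R)] --> (0 : U).
  by rewrite -(scale0r w); exact: scalel_continuous.
exact: hw0.
Qed.

End difference_quotients.

Section scalar_gronwall.
Context {R : realType}.

Lemma expR_weighted_nonincreasing (Q dQ : R -> R) (t0 t1 k : R) : t0 <= t1 ->
  (forall t, t0 <= t <= t1 -> is_derive t 1 Q (dQ t)) ->
  (forall t, t0 < t < t1 -> dQ t + k * Q t <= 0) ->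
  Q t1 * expR (k * t1) <= Q t0 * expR (k * t0).
Proof.
move=> t01 Qd Qk.
pose G t := Q t * expR (k * t).
have Gd t : t0 <= t <= t1 ->
    is_derive t 1 G (expR (k * t) * (dQ t + k * Q t)).
  move=> tI.
  have expR_d : is_derive t 1 (expR \o ( *%R k)) (expR (k * t) * (k * 1)).
    exact: is_derive1_comp.
  apply: is_derive_eq; first exact: (is_deriveM (Qd t tI) expR_d).
  by rewrite /GRing.scale /=; ring.
have Gd_oo t : t0 < t < t1 ->
    is_derive t 1 G (expR (k * t) * (dQ t + k * Q t)).
  by case/andP=> a b; apply: Gd; rewrite !ltW.
apply: (@ler0_derive1_le_cc R G t0 t1) => //.
- by move=> x; rewrite in_itv /= => xI; exact: (ex_derive (is_derive := Gd_oo x xI)).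
- move=> x; rewrite in_itv /= => xI.
  by rewrite derive1E (derive_val (is_derive := Gd_oo x xI)) pmulr_rle0 ?expR_gt0 ?Qk.
- apply: derivable_within_continuous => x; rewrite in_itv /= => xI.
  exact: (ex_derive (is_derive := Gd x xI)).
- by rewrite in_itv /= lexx t01.
- by rewrite in_itv /= lexx t01.
Qed.

Lemma gronwall_two_sided (Q dQ : R -> R) (t0 t1 c : R) : t0 <= t1 ->
  (forall t, t0 <= t <= t1 -> is_derive t 1 Q (dQ t)) ->
  (forall t, t0 < t < t1 -> `|dQ t| <= c * Q t) ->
  Q t1 <= Q t0 * expR (c * (t1 - t0)) /\ Q t0 <= Q t1 * expR (c * (t1 - t0)).
Proof.
move=> t01 Qd Qc.
have expR_gap : expR (c * (t1 - t0)) = expR (c * t1) * expR (- c * t0).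
  by rewrite -expRD; congr expR; ring.
have expR_cancel x : expR (c * x) * expR (- c * x) = 1.
  by rewrite mulNr expRxMexpNx_1.
have decay : Q t1 * expR (- c * t1) <= Q t0 * expR (- c * t0).
  apply: expR_weighted_nonincreasing => // t tI.
  by move: (Qc t tI); rewrite mulNr ler_norml => /andP[_]; lra.
have growth : - Q t1 * expR (c * t1) <= - Q t0 * expR (c * t0).
  apply: (@expR_weighted_nonincreasing (fun t => - Q t) (fun t => - dQ t)) => //.
    by move=> t tI; apply: is_deriveN; exact: Qd.
  by move=> t tI; move: (Qc t tI); rewrite ler_norml => /andP[+ _]; lra.
rewrite expR_gap; split.
  have -> : Q t1 = Q t1 * expR (- c * t1) * expR (c * t1).
    by rewrite -mulrA [_ * expR (c * t1)]mulrC expR_cancel mulr1.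
  rewrite [leRHS]mulrA [leRHS]mulrAC.
  by apply: ler_wpM2r; rewrite ?expR_ge0.
have -> : Q t0 = Q t0 * expR (c * t0) * expR (- c * t0).
  by rewrite -mulrA expR_cancel mulr1.
rewrite mulrA; apply: ler_wpM2r; rewrite ?expR_ge0 //.
by rewrite -lerN2 -!mulNr.
Qed.

End scalar_gronwall.

Section continuous_induction.
Context {R : realType}.

Lemma continuous_induction_lt (Q : R -> R) (a b y : R) :
  (forall t, a <= t <= b -> {for t, continuous Q}) ->
  (forall s, a <= s <= b -> (forall t, a < t < s -> Q t < y) -> Q s < y) ->
  forall t, a <= t <= b -> Q t < y.
Proof.
move=> Qc step t tI; rewrite ltNge; apply/negP => Qt.
pose S := [set s | a <= s <= b /\ y <= Q s].
have Sne : S !=set0 by exists t.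
have Slb : has_lbound S by exists a => s [/andP[]].
pose tau := inf S.
have tauI : a <= tau <= b.
  apply/andP; split; first by apply: lb_le_inf => // s [/andP[]].
  by apply: le_trans (ge_inf Slb (conj tI Qt)) _; case/andP: tI.
have Qtau : Q tau < y.
  apply: step => // s /andP[a_s s_tau]; rewrite ltNge; apply/negP => Qs.
  have : tau <= s.
    apply: ge_inf => //; split => //.
    by rewrite (ltW a_s) (le_trans (ltW s_tau)) //; case/andP: tauI.
  by rewrite leNgt s_tau.
have [e /= e0 Qe] := iffLR (nbhs_ballP _ _) (cvgr_lt _ (Qc tau tauI) y Qtau).
have [s Ss se] := inf_adherent e0 (conj Sne Slb).
have taus : tau <= s by exact: ge_inf.
case: Ss => _ Qs.
suff : Q s < y by rewrite ltNge Qs.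
by apply: Qe; rewrite -ball_normE /ball_ /= ler0_norm ?subr_le0 //; lra.
Qed.

End continuous_induction.

Section solution_gap.
Context {R : realType} {n : nat} (f : 'rV[R]_n -> 'rV[R]_n).

Lemma sqnorm_gap_derive_le (w b : 'rV[R]_n) (L : R) :
  0 <= L -> `|b| <= L * `|w| ->
  `|\sum_(i < n) 2 * w ord0 i * b ord0 i| <= (1 + n%:R * L ^+ 2) * sqnorm w.
Proof.
move=> L0 bw.
apply: le_trans (ler_norm_sum _ _ _) _.
apply: (@le_trans _ _ (sqnorm w + sqnorm b)).
  rewrite /sqnorm -big_split /=; apply: ler_sum => i _.
  move: (w ord0 i) (b ord0 i) => x y.
  have := sqr_ge0 (x - y); have := sqr_ge0 (x + y).
  by rewrite ler_norml => ? ?; apply/andP; split; nra.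
rewrite mulrDl mul1r lerD2l -mulrA.
apply: (le_trans (sqnorm_le_sqr_mx_norm b)); rewrite ler_wpM2l //.
apply: (@le_trans _ _ ((L * `|w|) ^+ 2)).
  by apply: lerXn2r; rewrite ?nnegrE ?mulr_ge0.
by rewrite exprMn ler_wpM2l ?sqr_ge0 // sqr_mx_norm_le_sqnorm.
Qed.

Lemma solutions_gap_gronwall (u z : R -> 'rV[R]_n) (t0 t1 L : R) :
  t0 <= t1 -> 0 <= L ->
  (forall t, t0 <= t <= t1 -> is_derive t 1 u (f (u t))) ->
  (forall t, t0 <= t <= t1 -> is_derive t 1 z (f (z t))) ->
  (forall t, t0 < t < t1 -> `|f (u t) - f (z t)| <= L * `|u t - z t|) ->
  let E := expR ((1 + n%:R * L ^+ 2) * (t1 - t0)) in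
  sqnorm (u t1 - z t1) <= sqnorm (u t0 - z t0) * E /\
  sqnorm (u t0 - z t0) <= sqnorm (u t1 - z t1) * E.
Proof.
move=> t01 L0 ud zd fL.
pose dQ t := \sum_(i < n) 2 * (u t - z t) ord0 i * (f (u t) - f (z t)) ord0 i.
apply: (@gronwall_two_sided _ (fun t => sqnorm (u t - z t)) dQ) => // [t tI|t tI].
  exact: is_derive_sqnorm (is_deriveB (ud t tI) (zd t tI)).
exact: sqnorm_gap_derive_le (fL t tI).
Qed.

Lemma solutions_gap_local (u z : R -> 'rV[R]_n) (t0 t1 L : R) :
  t0 <= t1 -> 0 <= L ->
  (forall t, t0 <= t <= t1 -> is_derive t 1 u (f (u t))) ->
  (forall t, t0 <= t <= t1 -> is_derive t 1 z (f (z t))) ->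
  (forall t y, t0 <= t <= t1 -> `|y - z t| <= 1 ->
     `|f y - f (z t)| <= L * `|y - z t|) ->
  let K := n%:R * expR ((1 + n%:R * L ^+ 2) * (t1 - t0)) in
  K * `|u t0 - z t0| ^+ 2 < 1 ->
  `|u t1 - z t1| ^+ 2 <= K * `|u t0 - z t0| ^+ 2 /\
  `|u t0 - z t0| ^+ 2 <= K * `|u t1 - z t1| ^+ 2.
Proof.
move=> t01 L0 ud zd fL K small.
pose c := 1 + n%:R * L ^+ 2; pose Q t := sqnorm (u t - z t).
have c0 : 0 <= c by rewrite addr_ge0 // mulr_ge0 // sqr_ge0.
have gap_gronwall s : t0 <= s <= t1 -> (forall t, t0 < t < s -> Q t < 1) ->
    Q s <= Q t0 * expR (c * (s - t0)) /\ Q t0 <= Q s * expR (c * (s - t0)).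
  case/andP=> t0s st1 Qlt1; apply: solutions_gap_gronwall => //.
  - by move=> t /andP[a b]; apply: ud; rewrite a (le_trans b).
  - by move=> t /andP[a b]; apply: zd; rewrite a (le_trans b).
  - move=> t /andP[a b]; apply: fL; first by rewrite !ltW // (lt_le_trans b).
    rewrite ltW // -(@expr_lt1 _ 2) //.
    by apply: le_lt_trans (sqr_mx_norm_le_sqnorm _) (Qlt1 t _); rewrite a b.
have gap_le_K (w : 'rV[R]_n) : sqnorm w * expR (c * (t1 - t0)) <= K * `|w| ^+ 2.
  by rewrite /K mulrAC ler_wpM2r ?expR_ge0 ?sqnorm_le_sqr_mx_norm.
have Q_lt1 t : t0 <= t <= t1 -> Q t < 1.
  apply: continuous_induction_lt => [s sI|s sI Qlt1].
    have Qd := is_derive_sqnorm (is_deriveB (ud s sI) (zd s sI)).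
    exact/differentiable_continuous/derivable1_diffP/(ex_derive (is_derive := Qd)).
  have [Qs _] := gap_gronwall s sI Qlt1.
  apply: le_lt_trans Qs (le_lt_trans (le_trans _ (gap_le_K _)) small).
  rewrite ler_wpM2l ?sqnorm_ge0 // ler_expR ler_wpM2l // lerD2r.
  by case/andP: sI.
have [fwd bwd] : Q t1 <= Q t0 * expR (c * (t1 - t0)) /\
                 Q t0 <= Q t1 * expR (c * (t1 - t0)).
  by apply: gap_gronwall => [|t /andP[a b]]; rewrite ?lexx ?t01 ?Q_lt1 // !ltW.
split; apply: le_trans (sqr_mx_norm_le_sqnorm _) _.
  exact: le_trans fwd (gap_le_K _).
exact: le_trans bwd (gap_le_K _).
Qed.

End solution_gap.

Section C1_lipschitz.
Context {R : realType} {n : nat} (f : 'rV[R]_n -> 'rV[R]_n).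

Lemma mean_value_mx_norm (x y : 'rV[R]_n) (M : R) :
  (forall p, differentiable f p) ->
  (forall s, 0 <= s <= 1 -> `|'J f (s *: (y - x) + x)| <= M) ->
  `|f y - f x| <= n%:R * M * `|y - x|.
Proof.
move=> fd JM; set v := y - x.
have M0 : 0 <= M by apply: le_trans (JM 0 _); rewrite ?normr_ge0 ?lexx ?ler01.
apply: mx_norm_le => [|i j]; first by rewrite !mulr_ge0.
rewrite (ord1 i) !mxE.
pose g (s : R) := f (s *: v + x) ord0 j.
have gd (s : R) : is_derive s 1 g ('D_v f (s *: v + x) ord0 j).
  exact/is_derive_rV_entry/is_derive_along_line.
have gc : {within `[0, 1], continuous g}.
  by apply: derivable_within_continuous => s _; exact: ex_derive.
have [c c01 gE] := MVT_segment ler01 (fun s _ => gd s) gc.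
have -> : f y ord0 j - f x ord0 j = g 1 - g 0.
  by rewrite /g scale1r scale0r add0r /v subrK.
rewrite gE subr0 mulr1 deriveEjacobian // mxE.
apply: le_trans (ler_norm_sum _ _ _) _.
rewrite -mulrA mulr_natl -[n in _ *+ n]card_ord -sumr_const.
apply: ler_sum => k _; rewrite normrM mulrC ler_pM ?mx_norm_ge_entry //.
by apply: le_trans (mx_norm_ge_entry _ k j) (JM c _); move: c01; rewrite in_itv.
Qed.

Lemma mx_norm_closed_ball_compact (B : R) :
  compact [set v : 'rV[R]_n | `|v| <= B].
Proof.
have [B0|B0] := leP 0 B; last first.
  rewrite (_ : [set v | _] = set0); first exact: compact0.
  apply/seteqP; split => v //=.
  by rewrite leNgt (lt_le_trans B0) ?normr_ge0.
have -> : [set v : 'rV[R]_n | `|v| <= B] = [set v | forall i, `[-B, B] (v ord0 i)].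
  apply/seteqP; split => v /= vB.
    by move=> i; rewrite in_itv /= -ler_norml (le_trans (mx_norm_ge_entry _ _ _)).
  apply: mx_norm_le => // i j; rewrite (ord1 i).
  by have := vB j; rewrite in_itv /= ler_norml.
apply: (@rV_compact _ _ (fun=> `[-B, B]%classic)) => i; exact: segment_compact.
Qed.

Lemma C1_lipschitz_on_ball (B : R) : is_C1 f ->
  exists2 L, 0 <= L & forall x y, `|x| <= B -> `|y| <= B ->
    `|f y - f x| <= L * `|y - x|.
Proof.
move=> [fd Jc].
have [M [_ JM]] := compact_bounded
  (continuous_compact (continuous_subspaceT Jc)
     (mx_norm_closed_ball_compact (B := B))).
have JM1 p : `|p| <= B -> `|'J f p| <= `|M| + 1.
  by move=> pB; apply: JM; [rewrite (le_lt_trans (ler_norm M)) ?ltrDl|exists p].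
exists (n%:R * (`|M| + 1)); first by rewrite mulr_ge0 ?addr_ge0.
move=> x y xB yB; apply: mean_value_mx_norm => // s /andP[s0 s1]; apply: JM1.
have -> : s *: (y - x) + x = s *: y + (1 - s) *: x.
  by rewrite scalerBr scalerBl scale1r addrAC -addrA.
apply: le_trans (ler_normD _ _) _; rewrite !normrZ !ger0_norm ?subr_ge0 //.
apply: le_trans (lerD (ler_wpM2l s0 yB) (ler_wpM2l _ xB)) _; rewrite ?subr_ge0 //.
by rewrite -mulrDl subrKC mul1r.
Qed.

Lemma C1_lipschitz_near_path (z : R -> 'rV[R]_n) (a b : R) : is_C1 f ->
  {within `[a, b], continuous z} ->
  exists2 L, 0 <= L & forall t y, a <= t <= b -> `|y - z t| <= 1 ->
    `|f y - f (z t)| <= L * `|y - z t|.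
Proof.
move=> fC1 zc.
have [B [_ zB]] := compact_bounded (continuous_compact zc (@segment_compact _ a b)).
have [L L0 fL] := C1_lipschitz_on_ball (`|B| + 2) fC1.
have zB1 t : a <= t <= b -> `|z t| <= `|B| + 1.
  move=> tI; apply: zB; first by rewrite (le_lt_trans (ler_norm B)) ?ltrDl.
  by exists t; rewrite ?in_itv.
exists L => // t y tI yz; apply: fL.
  by apply: le_trans (zB1 t tI) _; rewrite lerD2l ler1n.
rewrite -(subrK (z t) y); apply: le_trans (ler_normD _ _) _.
by apply: le_trans (lerD yz (zB1 t tI)) _; lra.
Qed.

End C1_lipschitz.

Lemma quotient_sqr_norm_le {R : realFieldType} {V : normedModType R}
    (a b : R -> V) (la lb : V) (K : R) :
  h^-1 *: a h @[h --> 0^'] --> la -> h^-1 *: b h @[h --> 0^'] --> lb ->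
  (\forall h \near 0, `|a h| ^+ 2 <= K * `|b h| ^+ 2) ->
  `|la| ^+ 2 <= K * `|lb| ^+ 2.
Proof.
move=> a_cvg b_cvg ab; rewrite !expr2.
have a_norm : `|h^-1 *: a h| @[h --> 0^'] --> `|la| by apply: cvg_norm.
have b_norm : `|h^-1 *: b h| @[h --> 0^'] --> `|lb| by apply: cvg_norm.
apply: ler_cvg_to (cvgM a_norm a_norm) (cvgM (cvg_cst K) (cvgM b_norm b_norm)) _.
near=> h; rewrite /= !normrZ -!expr2 !exprMn [leRHS]mulrCA ler_wpM2l ?sqr_ge0 //.
by near: h; apply: nbhs_dnbhs.
Unshelve. all: by end_near. Qed.

Lemma col_mx_unitmx_neq {R : comUnitRingType} m (p : 'rV[R]_(1 + m))
    (A : 'M[R]_(m, 1 + m)) (w : 'rV[R]_m) :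
  col_mx p A \in unitmx -> w *m A != p.
Proof.
move=> pA_unit; apply/eqP => wAp.
pose c : 'rV[R]_(1 + m) := row_mx (-1) w.
have c0 : c = 0.
  have : c *m col_mx p A = 0 by rewrite mul_row_col mulNmx mul1mx wAp addNr.
  move/(congr1 (mulmx^~ (invmx (col_mx p A)))).
  by rewrite -mulmxA mulmxV // mulmx1 mul0mx.
have := congr1 (fun r : 'rV[R]_(1 + m) => r ord0 (lshift m ord0)) c0.
by rewrite /c row_mxEl !mxE eqxx /= => /eqP; rewrite oppr_eq0 oner_eq0.
Qed.

Section periodic_orbit.
Context {R : realType} {n : nat} (f : 'rV[R]_n -> 'rV[R]_n).

Lemma periodic_orbit_gap (x0 : R -> 'rV[R]_n) (T : R) (u : R -> R -> 'rV[R]_n) :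
  is_C1 f -> 0 <= T -> global_solution f x0 -> (forall t, x0 (t + T) = x0 t) ->
  (\forall h \near (0 : R),
     forall t, 0 <= t <= T -> is_derive t 1 (u h) (f (u h t))) ->
  u h 0 - x0 h @[h --> (0 : R)] --> (0 : 'rV[R]_n) ->
  exists2 K, 0 <= K & \forall h \near (0 : R),
    `|u h T - x0 h| ^+ 2 <= K * `|u h 0 - x0 h| ^+ 2 /\
    `|u h 0 - x0 h| ^+ 2 <= K * `|u h T - x0 h| ^+ 2.
Proof.
move=> fC1 T0 x0_sol x0_per u_sol u0_cvg.
have x0_cont : {within `[-1, T + 1], continuous x0}.
  by apply: derivable_within_continuous => t _; exact: ex_derive.
have [L L0 fL] := C1_lipschitz_near_path fC1 x0_cont.
pose K := n%:R * expR ((1 + n%:R * L ^+ 2) * T).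
have small : \forall h \near 0, K * `|u h 0 - x0 h| ^+ 2 < 1.
  have gap_norm : `|u h 0 - x0 h| @[h --> (0 : R)] --> `|0 : 'rV[R]_n|.
    by apply: cvg_norm.
  have small_cvg : K * (`|u h 0 - x0 h| * `|u h 0 - x0 h|) @[h --> (0 : R)] -->
                    K * (`|0 : 'rV[R]_n| * `|0 : 'rV[R]_n|).
    exact: cvgM (cvg_cst K) (cvgM gap_norm gap_norm).
  rewrite normr0 !mulr0 in small_cvg.
  by apply: filterS (cvgr_lt _ small_cvg 1 ltr01) => h; rewrite expr2.
exists K; first by rewrite mulr_ge0 ?expR_ge0.
near=> h.
have h1 : `|h| <= 1 by near: h; exact: (@nbhs0_le _ R^o 1 ltr01).
have := @solutions_gap_local R n f (u h) (fun t => x0 (t + h)) 0 T L T0 L0.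
rewrite /= subr0 add0r (addrC T h) x0_per; apply.
- by near: h.
- by move=> t _; apply: is_derive_translate.
- move=> t y /andP[t0 tT]; apply: fL.
  by move: h1; rewrite ler_norml => /andP[h1l h1r]; apply/andP; split; lra.
- by near: h.
Unshelve. all: by end_near. Qed.

Lemma period_map_derivative_eq (x0 : R -> 'rV[R]_n) (T : R)
    (u : R -> R -> 'rV[R]_n) (d : 'rV[R]_n) :
  is_C1 f -> 0 <= T -> global_solution f x0 -> (forall t, x0 (t + T) = x0 t) ->
  (\forall h \near (0 : R), u h 0 = x0 0 + h *: d /\
     forall t, 0 <= t <= T -> is_derive t 1 (u h) (f (u h t))) ->
  h^-1 *: (u h T - u 0 T) @[h --> 0^'] --> derive1 x0 0 ->
  d = derive1 x0 0.
Proof.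
move=> fC1 T0 x0_sol x0_per u_near uT_quot.
have x0_derivable : derivable x0 0 1 by exact: ex_derive.
have init_gapE : \forall h \near (0 : R), h *: d - (x0 h - x0 0) = u h 0 - x0 h.
  by apply: filterS u_near => h [-> _]; rewrite opprB addrA (addrC (x0 0)).
have init_cvg : u h 0 - x0 h @[h --> (0 : R)] --> (0 : 'rV[R]_n).
  apply: cvg_trans (near_eq_cvg init_gapE) _.
  have x0_cont : x0 @ (0 : R) --> x0 0.
    exact/differentiable_continuous/derivable1_diffP.
  have scale_cvg : h *: d @[h --> (0 : R)] --> 0 *: d by exact: scalel_continuous.
  have -> : (0 : 'rV[R]_n) = 0 *: d - (x0 0 - x0 0) by rewrite scale0r subrr subr0.
  exact: cvgB scale_cvg (cvgB x0_cont (cvg_cst (x0 0))).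
have [K _ gap] := periodic_orbit_gap fC1 T0 x0_sol x0_per
  (filterS (fun=> @proj2 _ _) u_near) init_cvg.
have uT0 : u 0 T = x0 0.
  have [gapT _] := nbhs_singleton gap; move: gapT.
  rewrite -(nbhs_singleton init_gapE) scale0r subrr subr0 normr0 expr0n mulr0.
  by rewrite exprn_even_le0 //= normr_eq0 subr_eq0 => /eqP.
have quot_init : h^-1 *: (u h 0 - x0 h) @[h --> 0^'] --> d - derive1 x0 0.
  have split_cvg : d - h^-1 *: (x0 h - x0 0) @[h --> 0^'] --> d - derive1 x0 0.
    exact: cvgB (cvg_cst _) (derive1_quotient_cvg x0_derivable).
  apply: cvg_trans _ split_cvg; apply: near_eq_cvg; near=> h.
  rewrite -(near (nbhs_dnbhs init_gapE) h) // [RHS]scalerBr scalerA mulVf ?scale1r //.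
  by near: h; exact: nbhs_dnbhs_neq.
have quot_end : h^-1 *: (u h T - x0 h) @[h --> 0^'] --> (0 : 'rV[R]_n).
  have -> : (fun h => h^-1 *: (u h T - x0 h)) =
            (fun h => h^-1 *: (u h T - u 0 T) - h^-1 *: (x0 h - x0 0)).
    by apply/funext => h; rewrite -scalerBr uT0 opprB addrA subrK.
  rewrite -(subrr (derive1 x0 0)).
  exact: cvgB uT_quot (derive1_quotient_cvg x0_derivable).
have gap_init : \forall h \near (0 : R),
    `|u h 0 - x0 h| ^+ 2 <= K * `|u h T - x0 h| ^+ 2 by apply: filterS gap => h [].
have := quotient_sqr_norm_le quot_init quot_end gap_init.
by rewrite normr0 expr0n mulr0 exprn_even_le0 //= normr_eq0 subr_eq0 => /eqP.
Unshelve. all: by end_near. Qed.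

End periodic_orbit.

Theorem lemma1 (R : realType) (m : nat)
  (f : 'rV[R]_m.+1 -> 'rV[R]_m.+1) (x0 : R -> 'rV[R]_m.+1) (T : R)
  (A : 'M[R]_(m, m.+1)) (Phi : R -> 'rV[R]_m -> 'rV[R]_m.+1) :
  is_C1 f -> limit_cycle f x0 T -> nondegenerate_cycle f x0 T ->
  (col_mx (derive1 x0 0) A : 'M[R]_m.+1) \in unitmx ->
  (\forall v \near (0 : 'rV[R]_m),
     Phi 0 v = x0 0 + v *m A /\
     exists a b : R, [/\ a < 0, T < b & solution_on f a b (Phi ^~ v)]) ->
  differentiable (fun v => Phi T v) (0 : 'rV[R]_m) ->
  ~ exists w : 'rV[R]_m, 'd (fun v => Phi T v) 0 w = derive1 x0 0.
Proof.
move=> fC1 [T0 x0_sol x0_per _ _] _ unitA Phi_near Sd [w Sw].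
have u_near : \forall h \near (0 : R), Phi 0 (h *: w) = x0 0 + h *: (w *m A) /\
    forall t, 0 <= t <= T -> is_derive t 1 (Phi^~ (h *: w)) (f (Phi t (h *: w))).
  apply: filterS (near0_scale w Phi_near) => h /= [-> [a [b [a0 Tb sol]]]].
  split=> [|t /andP[t0 tT]]; first by rewrite scalemxAl.
  by apply: sol; apply/andP; split; lra.
have uT_quot : h^-1 *: (Phi T (h *: w) - Phi T (0 *: w)) @[h --> 0^'] --> derive1 x0 0.
  by rewrite scale0r -Sw; exact: diff_quotient_cvg.
have := period_map_derivative_eq fC1 (ltW T0) x0_sol x0_per u_near uT_quot.
by move/eqP; apply/negP; exact: col_mx_unitmx_neq.
Qed.
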